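(* Let $0<\theta_m<\theta_M$, $\Theta=(\theta_m,\theta_M)$, $\alpha>0$, $r>0$. For $\lambda>0$ let $(c(\lambda),Q(\cdot,\lambda))$ be the unique pair with $(-\lambda c(\lambda)+\theta\lambda^2+r)Q+\alpha\partial_{\theta\theta}Q=0$ on $\Theta$, $\partial_\theta Q(\theta_m,\lambda)=\partial_\theta Q(\theta_M,\lambda)=0$, $Q>0$, $\int_\Theta Q\,d\theta=1$, and let $c^*=\min_{\lambda>0}c(\lambda)$. Define $H:\mathbb{R}\to\mathbb{R}$ by $H(\lambda)=|\lambda|c(|\lambda|)$ for $\lambda\neq0$ and $H(0)=r$. Then: for all $\lambda\in\mathbb{R}$ there exists a unique solution $(H(\lambda),Q(\cdot,\lambda))$ of $$(-H(\lambda)+\theta\lambda^2+r)Q+\alpha\partial_{\theta\theta}Q=0\text{ on }\Theta,\quad \partial_\theta Q(\theta_m,\lambda)=\partial_\theta Q(\theta_M,\lambda)=0,\quad Q>0,\quad\int_\Theta Q\,d\theta=1;$$ the map $\lambda\mapsto H(\lambda)$ is continuous and convex on $\mathbb{R}$ and satisfies $\lambda^2\theta_m+r\le H(\lambda)\le\lambda^2\theta_M+r$ for all $\lambda$; for all $\lambda\in\mathbb{R}$, $\inf_{s>0}\{sH(\lambda/s)\}=|\lambda|c^*$; and $2\sqrt{\theta_mr}\le c^*\le2\sqrt{\theta_Mr}$.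
   Context: It is known (and taken as given) that for every $\lambda>0$ the pair $(c(\lambda),Q(\cdot,\lambda))$ described exists and is unique, that $\lambda\mapsto c(\lambda)$ is continuous on $(0,\infty)$ with $\lambda^2\theta_m+r\le\lambda c(\lambda)\le\lambda^2\theta_M+r$, and that $c$ attains its minimum $c^*$ at some $\lambda^*>0$. *)

From Stdlib Require Import Reals.
From Coquelicot Require Import Coquelicot.
Open Scope R_scope.

Definition eigpb (alpha r thm thM l h : R) (Q : R -> R) : Prop :=
  (forall th, thm <= th <= thM -> ex_derive Q th /\ ex_derive (Derive Q) th) /\
  (forall th, thm < th < thM ->
      (- h + th * l ^ 2 + r) * Q th + alpha * Derive_n Q 2 th = 0) /\
  Derive Q thm = 0 /\ Derive Q thM = 0 /\
  (forall th, thm < th < thM -> 0 < Q th) /\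
  is_RInt Q thm thM 1.

Definition Hfun (c : R -> R) (r l : R) : R :=
  if Req_EM_T l 0 then r else Rabs l * c (Rabs l).

(* Positivity of an eigenfunction up to the boundary comes from a Gronwall-type
   argument: (Q^2 + Q'^2) e^(s M x), s = 1 or -1, is monotone, so vanishing Cauchy data at an
   endpoint force Q = 0.  Convexity of the eigenvalue in the potential comes from
   the log-derivatives u = Q'/Q: for Neumann eigenpairs (h, P), (h1, Q1), (h2, Q2)
   the function (t u1 + (1-t) u2 - u) Q1^t Q2^(1-t) P vanishes at both endpoints,
   and at an interior critical point the Riccati equations give
   t h1 + (1-t) h2 - h >= t V1 + (1-t) V2 - V + alpha t (1-t) (u1 - u2)^2.
   With V = x l^2 + r this yields convexity of H and, at l = 0, uniqueness of the
   constant eigenpair; the other claims follow from H(l) = |l| c(|l|). *)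

From Stdlib Require Import Reals Lra Psatz.
From Coquelicot Require Import Coquelicot.
Open Scope R_scope.

Lemma continuity_pt_of_ex_derive (f : R -> R) x : ex_derive f x -> continuity_pt f x.
Proof.
  intros Hf. apply continuity_pt_filterlim.
  now apply (ex_derive_continuous (K := R_AbsRing) (V := R_NormedModule)).
Qed.

Lemma mvt_interior (f : R -> R) a b : a < b ->
  (forall x, a <= x <= b -> ex_derive f x) ->
  exists c, a < c < b /\ f b - f a = Derive f c * (b - a).
Proof.
  intros Hab Hf.
  destruct (MVT_cor2 f (Derive f) a b Hab) as [c [Hc Hmid]].
  - intros x Hx. apply is_derive_Reals, Derive_correct, Hf, Hx.
  - now exists c.
Qed.

Lemma constant_of_Derive_zero (f : R -> R) a b :
  (forall x, a <= x <= b -> ex_derive f x) ->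
  (forall x, a < x < b -> Derive f x = 0) ->
  forall x, a <= x <= b -> f x = f a.
Proof.
  intros Hf Hf0 x Hx.
  destruct (Req_dec x a) as [-> | Hxa]; [reflexivity |].
  destruct (mvt_interior f a x) as [c [Hc Hmid]]; [lra | intros y Hy; apply Hf; lra |].
  rewrite Hf0 in Hmid by lra. lra.
Qed.

Section Energy.
Variables (P k : R -> R) (a b M : R).
Hypothesis P_diff : forall x, a <= x <= b -> ex_derive P x /\ ex_derive (Derive P) x.
Hypothesis P_ode : forall x, a < x < b -> Derive (Derive P) x = k x * P x.
Hypothesis k_bound : forall x, a < x < b -> Rabs (1 + k x) <= M.

Let energy (s x : R) := (P x ^ 2 + Derive P x ^ 2) * exp (s * M * x).

(* Since |(P^2 + P'^2)'| = |2 P P' (1 + k)| <= M (P^2 + P'^2), the weight exp (s M x)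
   makes the energy monotone, increasing for s = 1 and decreasing for s = -1. *)
Lemma energy_monotone s x y : s * s = 1 -> a <= x -> x < y -> y <= b ->
  0 <= s * (energy s y - energy s x).
Proof.
  intros Hs Hax Hxy Hyb.
  destruct (mvt_interior (energy s) x y Hxy) as [z [Hz ->]].
  { intros u Hu. destruct (P_diff u) as [D1 D2]; [lra |].
    unfold energy. auto_derive. now repeat split. }
  destruct (P_diff z) as [D1 D2]; [lra |].
  assert (Hder : Derive (energy s) z = exp (s * M * z) *
    (2 * P z * Derive P z * (1 + k z) + s * M * (P z ^ 2 + Derive P z ^ 2))).
  { apply is_derive_unique. unfold energy. auto_derive; [now repeat split |].
    change (fun u => P u) with P; change (fun u => Derive P u) with (Derive P).
    rewrite P_ode by lra. ring. }
  rewrite Hder.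
  assert (Habs : Rabs (s * (1 + k z)) <= M).
  { assert (Hs1 : Rabs s = 1).
    { pose proof (Rabs_pos s).
      assert (Rabs s * Rabs s = 1) by (rewrite <- Rabs_mult, Hs; apply Rabs_R1). nra. }
    rewrite Rabs_mult, Hs1, Rmult_1_l. apply k_bound. lra. }
  assert (Hkey : 0 <= 2 * P z * Derive P z * (s * (1 + k z))
                      + M * (P z ^ 2 + Derive P z ^ 2)).
  { set (u := s * (1 + k z)) in *.
    pose proof (pow2_ge_0 (P z - Derive P z)). pose proof (pow2_ge_0 (P z + Derive P z)).
    pose proof (pow2_ge_0 (P z)). pose proof (pow2_ge_0 (Derive P z)).
    revert Habs. unfold Rabs. destruct Rcase_abs; intros; nra. }
  replace (s * _) with (exp (s * M * z) * (y - x) *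
    (2 * P z * Derive P z * (s * (1 + k z)) + (s * s) * M * (P z ^ 2 + Derive P z ^ 2))) by ring.
  rewrite Hs, Rmult_1_l. pose proof (exp_pos (s * M * z)).
  apply Rmult_le_pos; [apply Rmult_le_pos |]; lra.
Qed.

Lemma vanishing_of_endpoint_data :
  (P a = 0 /\ Derive P a = 0) \/ (P b = 0 /\ Derive P b = 0) ->
  forall x, a <= x <= b -> P x = 0.
Proof.
  intros Hend x Hx.
  assert (Hsq : forall s, 0 < exp (s * M * x) -> energy s x <= 0 -> P x = 0).
  { intros s He Hle. unfold energy in Hle.
    assert (P x ^ 2 + Derive P x ^ 2 <= 0) by (apply (Rmult_le_reg_r (exp (s * M * x))); lra).
    pose proof (pow2_ge_0 (Derive P x)). nra. }
  destruct Hend as [[Pa DPa] | [Pb DPb]].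
  - destruct (Req_dec x a) as [-> | Hxa]; [exact Pa |].
    apply (Hsq (-1)); [apply exp_pos |].
    pose proof (energy_monotone (-1) a x ltac:(ring) ltac:(lra) ltac:(lra) ltac:(lra)).
    assert (energy (-1) a = 0) by (unfold energy; rewrite Pa, DPa; ring). lra.
  - destruct (Req_dec x b) as [-> | Hxb]; [exact Pb |].
    apply (Hsq 1); [apply exp_pos |].
    pose proof (energy_monotone 1 x b ltac:(ring) ltac:(lra) ltac:(lra) ltac:(lra)).
    assert (energy 1 b = 0) by (unfold energy; rewrite Pb, DPb; ring). lra.
Qed.

End Energy.

Lemma nonneg_at_endpoints (f : R -> R) a b : a < b ->
  continuity_pt f a -> continuity_pt f b ->
  (forall x, a < x < b -> 0 < f x) -> 0 <= f a /\ 0 <= f b.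
Proof.
  intros Hab Ha Hb Hpos. apply continuity_pt_filterlim in Ha, Hb.
  assert (Hba : 0 < b - a) by lra. split.
  - apply (closed_filterlim_loc (F := at_right a) f (fun u => 0 <= u));
      [now apply filterlim_filter_le_1 with (2 := Ha), filter_le_within | | apply closed_ge].
    exists (mkposreal _ Hba). intros y Hy Hay.
    apply Rlt_le, Hpos. split; [exact Hay |].
    apply Rabs_lt_between' in Hy. simpl in Hy. lra.
  - apply (closed_filterlim_loc (F := at_left b) f (fun u => 0 <= u));
      [now apply filterlim_filter_le_1 with (2 := Hb), filter_le_within | | apply closed_ge].
    exists (mkposreal _ Hba). intros y Hy Hyb.
    apply Rlt_le, Hpos. split; [| exact Hyb].
    apply Rabs_lt_between' in Hy. simpl in Hy. lra.
Qed.

Lemma affine_coefficient_bound alpha h r L b x : 0 < alpha -> 0 <= L -> 0 < x <= b ->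
  Rabs (1 + (h - x * L - r) / alpha) <= 1 + (Rabs (h - r) + b * L) / alpha.
Proof.
  intros Halpha HL Hx.
  assert (HxL : 0 <= x * L <= b * L) by nra.
  pose proof (Rle_abs (h - r)). pose proof (Rabs_maj2 (h - r)).
  apply Rabs_le. unfold Rdiv.
  assert (0 < / alpha) by (apply Rinv_0_lt_compat; lra).
  split; nra.
Qed.

Lemma eigpb_pos alpha r a b l h Q : 0 < a -> a < b -> 0 < alpha ->
  eigpb alpha r a b l h Q -> forall x, a <= x <= b -> 0 < Q x.
Proof.
  intros Ha Hab Halpha [Hdiff [Hode [Da [Db [Hpos _]]]]].
  assert (Hvanish : (Q a = 0 /\ Derive Q a = 0) \/ (Q b = 0 /\ Derive Q b = 0) ->
            forall x, a <= x <= b -> Q x = 0).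
  { apply (vanishing_of_endpoint_data Q (fun x => (h - x * l ^ 2 - r) / alpha) a b
             (1 + (Rabs (h - r) + b * l ^ 2) / alpha)); [exact Hdiff | |].
    - intros x Hx. specialize (Hode x Hx). apply (Rmult_eq_reg_l alpha); [| lra].
      replace (alpha * ((h - x * l ^ 2 - r) / alpha * Q x)) with ((h - x * l ^ 2 - r) * Q x)
        by (field; lra).
      change (Derive_n Q 2 x) with (Derive (Derive Q) x) in Hode. lra.
    - intros x Hx. apply affine_coefficient_bound; [lra | apply pow2_ge_0 | lra]. }
  assert (Hcont : forall x, a <= x <= b -> continuity_pt Q x)
    by (intros x Hx; apply continuity_pt_of_ex_derive, Hdiff, Hx).
  destruct (nonneg_at_endpoints Q a b Hab) as [Qa Qb]; [apply Hcont; lra .. | exact Hpos |].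
  assert (Hmid : 0 < Q ((a + b) / 2)) by (apply Hpos; lra).
  assert (Qa0 : Q a <> 0).
  { intros E. rewrite (Hvanish (or_introl (conj E Da))) in Hmid; lra. }
  assert (Qb0 : Q b <> 0).
  { intros E. rewrite (Hvanish (or_intror (conj E Db))) in Hmid; lra. }
  intros x Hx.
  destruct (Req_dec x a) as [-> | Hxa]; [lra |].
  destruct (Req_dec x b) as [-> | Hxb]; [lra |].
  apply Hpos. lra.
Qed.

Definition neumann_eigenfunction (alpha a b : R) (V : R -> R) (h : R) (Q : R -> R) :=
  (forall x, a <= x <= b -> ex_derive Q x /\ ex_derive (Derive Q) x /\ 0 < Q x) /\
  (forall x, a < x < b -> alpha * Derive (Derive Q) x = (h - V x) * Q x) /\
  Derive Q a = 0 /\ Derive Q b = 0.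

Lemma eigpb_neumann_eigenfunction alpha r a b l h Q : 0 < a -> a < b -> 0 < alpha ->
  eigpb alpha r a b l h Q -> neumann_eigenfunction alpha a b (fun x => x * l ^ 2 + r) h Q.
Proof.
  intros Ha Hab Halpha HQ.
  pose proof (eigpb_pos alpha r a b l h Q Ha Hab Halpha HQ) as Hpos.
  destruct HQ as [Hdiff [Hode [Da [Db _]]]].
  split; [| split; [| split]]; try assumption.
  - intros x Hx. destruct (Hdiff x Hx). auto.
  - intros x Hx. specialize (Hode x Hx).
    change (Derive_n Q 2 x) with (Derive (Derive Q) x) in Hode. lra.
Qed.

Section LogDerivativeComparison.
Variables (alpha a b t h h1 h2 : R) (V V1 V2 P Q1 Q2 : R -> R).
Hypotheses (Halpha : 0 < alpha) (Hab : a < b) (Ht : 0 <= t <= 1).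
Hypotheses (HP : neumann_eigenfunction alpha a b V h P)
  (HQ1 : neumann_eigenfunction alpha a b V1 h1 Q1)
  (HQ2 : neumann_eigenfunction alpha a b V2 h2 Q2).

Let logd (Q : R -> R) x := Derive Q x / Q x.

(* With u = P'/P one has u' = (h - V)/alpha - u^2; the weight Q1^t Q2^(1-t) P turns
   the Riccati terms of w = t u1 + (1-t) u2 - u into the single square
   -t (1-t) (u1 - u2)^2 in the derivative below. *)
Let W x := (t * logd Q1 x + (1 - t) * logd Q2 x - logd P x) *
  exp (t * ln (Q1 x) + (1 - t) * ln (Q2 x) + ln (P x)).

Lemma W_ex_derive x : a <= x <= b -> ex_derive W x.
Proof.
  intros Hx. destruct (proj1 HP x Hx) as [DP [DDP PP]].
  destruct (proj1 HQ1 x Hx) as [DQ1 [DDQ1 PQ1]].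
  destruct (proj1 HQ2 x Hx) as [DQ2 [DDQ2 PQ2]].
  unfold W, logd. auto_derive. repeat split; auto; lra.
Qed.

Lemma W_Derive x : a < x < b ->
  Derive W x = exp (t * ln (Q1 x) + (1 - t) * ln (Q2 x) + ln (P x)) *
    ((t * (h1 - V1 x) + (1 - t) * (h2 - V2 x) - (h - V x)) / alpha
     - t * (1 - t) * (logd Q1 x - logd Q2 x) ^ 2).
Proof.
  intros Hx. assert (Hx' : a <= x <= b) by lra.
  destruct (proj1 HP x Hx') as [DP [DDP PP]].
  pose proof (proj1 (proj2 HP) x Hx) as EP.
  destruct (proj1 HQ1 x Hx') as [DQ1 [DDQ1 PQ1]].
  pose proof (proj1 (proj2 HQ1) x Hx) as EQ1.
  destruct (proj1 HQ2 x Hx') as [DQ2 [DDQ2 PQ2]].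
  pose proof (proj1 (proj2 HQ2) x Hx) as EQ2.
  apply is_derive_unique. unfold W, logd. auto_derive; [repeat split; auto; lra |].
  change (fun u => P u) with P; change (fun u => Q1 u) with Q1; change (fun u => Q2 u) with Q2.
  change (fun u => Derive P u) with (Derive P); change (fun u => Derive Q1 u) with (Derive Q1);
  change (fun u => Derive Q2 u) with (Derive Q2).
  replace (Derive (Derive P) x) with ((h - V x) * P x / alpha)
    by (apply (Rmult_eq_reg_l alpha); [rewrite EP; field |]; lra).
  replace (Derive (Derive Q1) x) with ((h1 - V1 x) * Q1 x / alpha)
    by (apply (Rmult_eq_reg_l alpha); [rewrite EQ1; field |]; lra).
  replace (Derive (Derive Q2) x) with ((h2 - V2 x) * Q2 x / alpha)
    by (apply (Rmult_eq_reg_l alpha); [rewrite EQ2; field |]; lra).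
  field. repeat split; lra.
Qed.

Lemma neumann_eigenvalue_convex :
  (forall x, a < x < b -> V x <= t * V1 x + (1 - t) * V2 x) ->
  h <= t * h1 + (1 - t) * h2.
Proof.
  intros HV.
  assert (HWa : W a = 0).
  { destruct HP as [_ [_ [DPa _]]]; destruct HQ1 as [_ [_ [DQ1a _]]];
      destruct HQ2 as [_ [_ [DQ2a _]]].
    unfold W, logd. rewrite DPa, DQ1a, DQ2a. unfold Rdiv. ring. }
  assert (HWb : W b = 0).
  { destruct HP as [_ [_ [_ DPb]]]; destruct HQ1 as [_ [_ [_ DQ1b]]];
      destruct HQ2 as [_ [_ [_ DQ2b]]].
    unfold W, logd. rewrite DPb, DQ1b, DQ2b. unfold Rdiv. ring. }
  destruct (mvt_interior W a b Hab W_ex_derive) as [xi [Hxi Hmvt]].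
  rewrite HWa, HWb, W_Derive in Hmvt by exact Hxi.
  set (E := exp _) in Hmvt. assert (HE : 0 < E) by apply exp_pos.
  set (K := t * (h1 - V1 xi) + (1 - t) * (h2 - V2 xi) - (h - V xi)) in Hmvt.
  set (g := logd Q1 xi - logd Q2 xi) in Hmvt.
  assert (Hzero : K / alpha = t * (1 - t) * g ^ 2).
  { assert (E * (b - a) <> 0) by (apply Rmult_integral_contrapositive; split; lra).
    apply (Rmult_eq_reg_l (E * (b - a))); [|assumption]. lra. }
  assert (HK : 0 <= K).
  { assert (0 <= K / alpha) by (rewrite Hzero; apply Rmult_le_pos; [nra | apply pow2_ge_0]).
    replace K with (K / alpha * alpha) by (field; lra). nra. }
  specialize (HV xi Hxi). unfold K in HK. lra.
Qed.

End LogDerivativeComparison.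

Lemma neumann_eigenvalue_mono alpha a b V V1 h h1 P Q1 : 0 < alpha -> a < b ->
  neumann_eigenfunction alpha a b V h P -> neumann_eigenfunction alpha a b V1 h1 Q1 ->
  (forall x, a < x < b -> V x <= V1 x) -> h <= h1.
Proof.
  intros Halpha Hab HP HQ1 HV.
  replace h1 with (1 * h1 + (1 - 1) * h1) by ring.
  apply (neumann_eigenvalue_convex alpha a b 1 h h1 h1 V V1 V1 P Q1 Q1); auto; [lra |].
  intros x Hx. specialize (HV x Hx). lra.
Qed.

Lemma eigpb_Rabs alpha r a b l h Q :
  eigpb alpha r a b (Rabs l) h Q <-> eigpb alpha r a b l h Q.
Proof. unfold eigpb. now rewrite pow2_abs. Qed.

Lemma eigpb_zero_constant alpha r a b : a < b -> eigpb alpha r a b 0 r (fun _ => / (b - a)).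
Proof.
  intros Hab.
  assert (D0 : forall x, Derive (fun _ => / (b - a)) x = 0) by (intros; apply Derive_const).
  split; [| split; [| split; [| split; [| split]]]].
  - intros x _. split; [apply ex_derive_const |].
    apply (ex_derive_ext (fun _ => 0)); [intros; now rewrite D0 | apply ex_derive_const].
  - intros x _. change (Derive_n _ 2 x) with (Derive (Derive (fun _ : R => / (b - a))) x).
    rewrite (Derive_ext _ (fun _ => 0) x D0), Derive_const. ring.
  - apply D0.
  - apply D0.
  - intros x _. apply Rinv_0_lt_compat. lra.
  - replace 1 with ((b - a) * / (b - a)) by (field; lra).
    exact (is_RInt_const a b (/ (b - a))).
Qed.

Lemma eigpb_zero_unique alpha r a b h Q : 0 < a -> a < b -> 0 < alpha ->
  eigpb alpha r a b 0 h Q -> h = r /\ forall x, a <= x <= b -> Q x = / (b - a).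
Proof.
  intros Ha Hab Halpha HQ.
  pose proof (eigpb_neumann_eigenfunction _ _ _ _ _ _ _ Ha Hab Halpha HQ) as NQ.
  pose proof (eigpb_neumann_eigenfunction _ _ _ _ _ _ _ Ha Hab Halpha
                (eigpb_zero_constant alpha r a b Hab)) as NC.
  assert (Hh : h = r).
  { apply Rle_antisym;
      [apply (neumann_eigenvalue_mono _ _ _ _ _ _ _ _ _ Halpha Hab NQ NC)
      | apply (neumann_eigenvalue_mono _ _ _ _ _ _ _ _ _ Halpha Hab NC NQ)];
      intros; lra. }
  subst h. split; [reflexivity |].
  destruct HQ as [Hdiff [Hode [Da [_ [_ Hint]]]]].
  assert (DQ0 : forall x, a <= x <= b -> Derive Q x = 0).
  { intros x Hx. rewrite <- Da. apply (constant_of_Derive_zero (Derive Q) a b); [| | exact Hx].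
    - intros y Hy. apply Hdiff, Hy.
    - intros y Hy. specialize (Hode y Hy).
      change (Derive_n Q 2 y) with (Derive (Derive Q) y) in Hode.
      apply (Rmult_eq_reg_l alpha); lra. }
  assert (HQa : forall x, a <= x <= b -> Q x = Q a).
  { apply constant_of_Derive_zero; [intros x Hx; apply Hdiff, Hx |].
    intros x Hx. apply DQ0. lra. }
  assert (Hint' : is_RInt (fun _ => Q a) a b 1).
  { apply (is_RInt_ext Q); [| exact Hint].
    rewrite Rmin_left, Rmax_right by lra. intros x Hx. apply HQa. lra. }
  pose proof (is_RInt_unique _ _ _ _ Hint') as Hmass. rewrite RInt_const in Hmass.
  change (scal (b - a) (Q a)) with ((b - a) * Q a) in Hmass.
  intros x Hx. rewrite HQa by exact Hx.
  apply (Rmult_eq_reg_l (b - a)); [rewrite Hmass; field |]; lra.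
Qed.

Lemma Hfun_0 c r : Hfun c r 0 = r.
Proof. unfold Hfun. now destruct Req_EM_T. Qed.

Lemma Hfun_neq0 c r l : l <> 0 -> Hfun c r l = Rabs l * c (Rabs l).
Proof. intros Hl. unfold Hfun. now destruct Req_EM_T. Qed.

Lemma Hfun_rescale c r l s : l <> 0 -> 0 < s ->
  s * Hfun c r (l / s) = Rabs l * c (Rabs l / s).
Proof.
  intros Hl Hs.
  assert (Habs : Rabs (l / s) = Rabs l / s).
  { unfold Rdiv. rewrite Rabs_mult, Rabs_inv, (Rabs_pos_eq s); lra. }
  rewrite Hfun_neq0, Habs.
  - field. lra.
  - unfold Rdiv. apply Rmult_integral_contrapositive.
    split; [exact Hl | apply Rinv_neq_0_compat; lra].
Qed.

Lemma two_sqrt_mul_le a r l : 0 <= a -> 0 <= r -> 2 * sqrt (a * r) * l <= l ^ 2 * a + r.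
Proof.
  intros Ha Hr. rewrite sqrt_mult by assumption.
  pose proof (sqrt_sqrt a Ha). pose proof (sqrt_sqrt r Hr).
  pose proof (pow2_ge_0 (l * sqrt a - sqrt r)). nra.
Qed.

Lemma two_sqrt_mul_eq a r : 0 < a -> 0 <= r ->
  sqrt (r / a) ^ 2 * a + r = 2 * sqrt (a * r) * sqrt (r / a).
Proof.
  intros Ha Hr.
  assert (Hra : 0 <= r / a) by (apply Rmult_le_pos; [| left; apply Rinv_0_lt_compat]; lra).
  rewrite pow2_sqrt by exact Hra.
  rewrite Rmult_assoc, <- sqrt_mult by (try exact Hra; apply Rmult_le_pos; lra).
  replace (a * r * (r / a)) with (r ^ 2) by (field; lra).
  rewrite sqrt_pow2 by exact Hr. field. lra.
Qed.

Section EffectiveHamiltonian.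
Variables (thm thM alpha r : R) (c : R -> R).
Hypotheses (Hthm : 0 < thm) (HthmM : thm < thM) (Halpha : 0 < alpha) (Hr : 0 < r).
Hypothesis Hc : forall l, 0 < l ->
  exists Q0, eigpb alpha r thm thM l (l * c l) Q0 /\
    forall cc Q, eigpb alpha r thm thM l (l * cc) Q ->
      cc = c l /\ (forall th, thm <= th <= thM -> Q th = Q0 th).
Hypothesis Hccont : forall l, 0 < l -> continuous c l.
Hypothesis Hcbnd : forall l, 0 < l -> l ^ 2 * thm + r <= l * c l <= l ^ 2 * thM + r.

Let H := Hfun c r.

Lemma Hfun_eigenpair l :
  exists Q0, eigpb alpha r thm thM l (H l) Q0 /\
    forall h Q, eigpb alpha r thm thM l h Q ->
      h = H l /\ (forall th, thm <= th <= thM -> Q th = Q0 th).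
Proof.
  destruct (Req_dec l 0) as [-> | Hl].
  - exists (fun _ => / (thM - thm)). unfold H. rewrite Hfun_0. split.
    + now apply eigpb_zero_constant.
    + intros h Q. now apply eigpb_zero_unique.
  - assert (Hal : 0 < Rabs l) by now apply Rabs_pos_lt.
    unfold H. rewrite Hfun_neq0 by exact Hl.
    destruct (Hc (Rabs l) Hal) as [Q0 [HQ0 Huniq]].
    exists Q0. split; [now apply eigpb_Rabs |].
    intros h Q HQ. apply eigpb_Rabs in HQ.
    replace h with (Rabs l * (h / Rabs l)) in HQ |- * by (field; lra).
    destruct (Huniq _ _ HQ) as [-> HQQ0]. now split.
Qed.

Lemma Hfun_bounds l : l ^ 2 * thm + r <= H l <= l ^ 2 * thM + r.
Proof.
  unfold H. destruct (Req_dec l 0) as [-> | Hl].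
  - rewrite Hfun_0. simpl. lra.
  - rewrite Hfun_neq0, <- pow2_abs by exact Hl. now apply Hcbnd, Rabs_pos_lt.
Qed.

Lemma Hfun_continuous l : continuous H l.
Proof.
  destruct (Req_dec l 0) as [-> | Hl].
  - assert (Hpoly : forall k, is_lim (fun y => y ^ 2 * k + r) 0 r).
    { intros k. replace (Finite r) with (Finite (0 ^ 2 * k + r)) by (f_equal; ring).
      apply (is_lim_continuity (fun y => y ^ 2 * k + r) 0), continuity_pt_of_ex_derive.
      auto_derive. easy. }
    apply continuity_pt_filterlim, continuity_pt_filterlim'. unfold H at 2. rewrite Hfun_0.
    change (is_lim H 0 r).
    apply (is_lim_le_le_loc _ _ _ _ _ (filter_forall _ (fun y => Hfun_bounds y)));
      apply Hpoly.
  - assert (Hal : 0 < Rabs l) by now apply Rabs_pos_lt.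
    apply (continuous_ext_loc _ (fun y => Rabs y * c (Rabs y))).
    + exists (mkposreal _ Hal). intros y Hy. symmetry. unfold H. apply Hfun_neq0.
      intros ->. apply Rabs_lt_between' in Hy. simpl in Hy.
      destruct (Rle_or_lt 0 l); [rewrite Rabs_pos_eq in Hy | rewrite Rabs_left in Hy]; lra.
    + apply (continuous_mult (fun y => Rabs y) (fun y => c (Rabs y))); [apply continuous_Rabs |].
      apply (continuous_comp Rabs c); [apply continuous_Rabs | now apply Hccont].
Qed.

Lemma Hfun_convex x y t : 0 <= t <= 1 -> H (t * x + (1 - t) * y) <= t * H x + (1 - t) * H y.
Proof.
  intros Ht.
  destruct (Hfun_eigenpair x) as [Qx [Ex _]].
  destruct (Hfun_eigenpair y) as [Qy [Ey _]].
  destruct (Hfun_eigenpair (t * x + (1 - t) * y)) as [Qz [Ez _]].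
  apply (neumann_eigenvalue_convex alpha thm thM t _ _ _
           (fun th => th * (t * x + (1 - t) * y) ^ 2 + r) (fun th => th * x ^ 2 + r)
           (fun th => th * y ^ 2 + r) Qz Qx Qy); try lra;
    try (apply eigpb_neumann_eigenfunction; assumption).
  intros th Hth.
  assert (0 <= t * (1 - t) * (x - y) ^ 2) by (apply Rmult_le_pos; [nra | apply pow2_ge_0]).
  nra.
Qed.

Variables (ls : R).
Hypotheses (Hls : 0 < ls) (Hmin : forall l, 0 < l -> c ls <= c l).

(* For l <> 0 the infimum is attained at s = |l| / ls; for l = 0 it is the
   unattained limit of s * r as s -> 0. *)
Lemma Hfun_rescaled_glb l :
  is_glb_Rbar (fun v => exists s, 0 < s /\ v = s * H (l / s)) (Rabs l * c ls).
Proof.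
  destruct (Req_dec l 0) as [-> | Hl]; rewrite ?Rabs_R0, ?Rmult_0_l; split.
  - intros v [s [Hs ->]]. simpl. unfold Rdiv. rewrite Rmult_0_l. unfold H. rewrite Hfun_0. nra.
  - intros [b0 | |] Hb; simpl; trivial.
    + apply Rnot_lt_le. intros Hb0.
      assert (Hs : 0 < b0 / (2 * r)) by (apply Rdiv_lt_0_compat; lra).
      specialize (Hb _ (ex_intro _ _ (conj Hs eq_refl))). simpl in Hb.
      unfold Rdiv at 2 in Hb. rewrite Rmult_0_l in Hb. unfold H in Hb. rewrite Hfun_0 in Hb.
      replace (b0 / (2 * r) * r) with (b0 / 2) in Hb by (field; lra). lra.
    + exact (Hb _ (ex_intro _ 1 (conj Rlt_0_1 eq_refl))).
  - assert (Hal : 0 < Rabs l) by now apply Rabs_pos_lt.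
    intros v [s [Hs ->]]. simpl. unfold H. rewrite Hfun_rescale by assumption.
    apply Rmult_le_compat_l; [lra |]. apply Hmin, Rdiv_lt_0_compat; lra.
  - assert (Hal : 0 < Rabs l) by now apply Rabs_pos_lt.
    intros bb Hb. assert (Hs : 0 < Rabs l / ls) by (apply Rdiv_lt_0_compat; lra).
    replace (Rabs l * c ls) with (Rabs l / ls * H (l / (Rabs l / ls))).
    { apply Hb. now exists (Rabs l / ls). }
    unfold H. rewrite Hfun_rescale by assumption.
    replace (Rabs l / (Rabs l / ls)) with ls by (field; lra). reflexivity.
Qed.

Lemma cstar_bounds : 2 * sqrt (thm * r) <= c ls <= 2 * sqrt (thM * r).
Proof.
  split.
  - apply (Rmult_le_reg_r ls); [exact Hls |].
    pose proof (two_sqrt_mul_le thm r ls ltac:(lra) ltac:(lra)).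
    pose proof (Hcbnd ls Hls). lra.
  - pose proof (two_sqrt_mul_eq thM r ltac:(lra) ltac:(lra)).
    set (l0 := sqrt (r / thM)) in *.
    assert (Hl0 : 0 < l0) by (apply sqrt_lt_R0, Rdiv_lt_0_compat; lra).
    pose proof (Hcbnd l0 Hl0). pose proof (Hmin l0 Hl0).
    enough (c l0 <= 2 * sqrt (thM * r)) by lra.
    apply (Rmult_le_reg_r l0); [exact Hl0 |]. lra.
Qed.

End EffectiveHamiltonian.

Theorem proposition1p12
  (thm thM alpha r : R) (c : R -> R) (ls : R)
  (Hthm : 0 < thm) (HthmM : thm < thM) (Halpha : 0 < alpha) (Hr : 0 < r)
  (Hc : forall l, 0 < l ->
     exists Q0, eigpb alpha r thm thM l (l * c l) Q0 /\
       forall cc Q, eigpb alpha r thm thM l (l * cc) Q ->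
         cc = c l /\ (forall th, thm <= th <= thM -> Q th = Q0 th))
  (Hccont : forall l, 0 < l -> continuous c l)
  (Hcbnd : forall l, 0 < l ->
     l ^ 2 * thm + r <= l * c l <= l ^ 2 * thM + r)
  (Hls : 0 < ls) (Hmin : forall l, 0 < l -> c ls <= c l) :
  let H := Hfun c r in
  let cstar := c ls in
  (forall l, exists Q0, eigpb alpha r thm thM l (H l) Q0 /\
     forall h Q, eigpb alpha r thm thM l h Q ->
       h = H l /\ (forall th, thm <= th <= thM -> Q th = Q0 th)) /\
  (forall l, continuous H l) /\
  (forall x y t, 0 <= t <= 1 ->
     H (t * x + (1 - t) * y) <= t * H x + (1 - t) * H y) /\
  (forall l, l ^ 2 * thm + r <= H l <= l ^ 2 * thM + r) /\
  (forall l, is_glb_Rbar (fun v => exists s, 0 < s /\ v = s * H (l / s))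
                         (Finite (Rabs l * cstar))) /\
  2 * sqrt (thm * r) <= cstar <= 2 * sqrt (thM * r).
Proof.
  intros H cstar; unfold H, cstar.
  split; [intros l; now apply Hfun_eigenpair |].
  split; [intros l; now apply (Hfun_continuous thm thM) |].
  split; [intros x y t Ht; now apply (Hfun_convex thm thM alpha) |].
  split; [intros l; now apply Hfun_bounds |].
  split; [intros l; now apply Hfun_rescaled_glb |].
  now apply cstar_bounds.
Qed.
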